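(* Let $k\ge1$. The code $C=\Phi_R(\mathcal{S}_k^{\alpha})$ over $\mathbb{F}_q$ has length $q^{s(k+1)-1}$, has $q^{sk}$ codewords, and has minimum Hamming distance $q^{s(k+1)-2}(q-1)$. Moreover its Hamming weight enumerator is $W_C(X,Y)=A_\ell X^{n'-\ell}Y^\ell+X^{n'}$, where $n'=q^{s(k+1)-1}$, $A_\ell=q^{sk}-1$ and $\ell=q^{s(k+1)-2}(q-1)$.
   Context: Let $R$ be a finite commutative chain ring: a finite commutative ring with $1\neq0$ whose ideals form a single chain under inclusion. Its unique maximal ideal is principal, generated by some $\gamma$; let $s\ge1$ be the least integer with $\gamma^s=0$. The residue field $R/\langle\gamma\rangle$ is isomorphic to $\mathbb{F}_q$, $q$ a prime power, and $\bar r$ denotes the image of $r\in R$ in it. Fix a set $T=\{e_0,\dots,e_{q-1}\}\subseteq R$ of coset representatives of $R/\langle\gamma\rangle$ with $e_0=0$, $e_1=1$, ordered $e_0<\dots<e_{q-1}$. Every $r\in R$ has a unique $\gamma$-adic representation $r=\sum_{i=0}^{s-1}r_i\gamma^i$ with $r_i\in T$. Order $R$ by: $x>y$ iff $x_i>y_i$ in $T$ for the largest $i$ with $x_i\neq y_i$. List $R=\{\rho_0,\dots,\rho_{q^s-1}\}$ increasingly. For $a\in R$, $\mathbf{a}^{(m)}$ is the constant vector of length $m$. Define $G_1^\alpha=(\rho_0\ \rho_1\ \cdots\ \rho_{q^s-1})$ and, for $k>1$, $G_k^\alpha$ as the $k\times q^{sk}$ matrix of $q^s$ column blocks, the $j$-th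 block having first row $\boldsymbol{\rho_j}^{(q^{s(k-1)})}$ and a copy of $G_{k-1}^\alpha$ below it. $\mathcal{S}_k^\alpha$ is the $R$-submodule of $R^{q^{sk}}$ generated by the rows of $G_k^\alpha$. Gray map: let $M$ be the $s\times q^{s-1}$ matrix over $\mathbb{F}_q$ (a generator matrix of the first order $q$-ary Reed–Muller code of length $q^{s-1}$) whose columns are exactly the vectors $(v,1)^T$, $v\in\mathbb{F}_q^{s-1}$; define $\Phi_R:R\to\mathbb{F}_q^{q^{s-1}}$ by $\Phi_R(r)=(\bar r_0,\dots,\bar r_{s-1})M$ and extend it coordinatewise to $R^n\to\mathbb{F}_q^{nq^{s-1}}$. The Hamming weight enumerator of a code $C$ of length $n$ is $\sum_iA_iX^{n-i}Y^i$ with $A_i$ the number of codewords of Hamming weight $i$. *)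

From mathcomp Require Import all_boot all_order all_algebra.
Set Implicit Arguments. Unset Strict Implicit. Unset Printing Implicit Defensive.
Import GRing.Theory.
Local Open Scope ring_scope.

Section ChainRingCodes.
Variables (R : finComNzRingType) (F : finFieldType).
Local Notation q := #|F|.

Definition is_ideal (I : {set R}) : Prop :=
  [/\ 0 \in I, (forall x y, x \in I -> y \in I -> x + y \in I)
    & (forall r x, x \in I -> r * x \in I)].

Definition is_maximal_ideal (I : {set R}) : Prop :=
  [/\ is_ideal I, I != [set: R]
    & forall J, is_ideal J -> I \subset J -> J = I \/ J = [set: R]].

Definition principal_ideal (g : R) : {set R} := [set g * r | r : R].

Definition is_chain_ring : Prop :=
  forall I J : {set R}, is_ideal I -> is_ideal J -> I \subset J \/ J \subset I.

Variables (gamma : R) (s : nat) (e : nat -> R).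
(* e i = e_i, the i-th element of the set T of coset representatives,
   the order on T being e_0 < e_1 < ... < e_{q-1}. *)

Definition gadic_expansion (r : R) (d : {ffun 'I_s -> 'I_q}) : bool :=
  r == \sum_(i < s) e (d i) * gamma ^+ i.

(* index in T of the i-th gamma-adic digit r_i of r (r_i = e_(digit r i)) *)
Definition digit (r : R) (i : 'I_s) : nat :=
  if [pick d | gadic_expansion r d] is Some d then val (d i) else 0%N.

Definition chain_lt (y x : R) : bool :=
  [exists i : 'I_s, (digit y i < digit x i)%N &&
     [forall j : 'I_s, (i < j)%N ==> (digit y j == digit x j)]].

Definition rho (j : nat) : R :=
  odflt 0 [pick r : R | #|[set y | chain_lt y r]| == j].

(* entry (i, c) of G_k^alpha (0-indexed rows and columns), following the
   recursive block definition: G_1 = (rho_0 ... rho_{q^s-1}); the j-th column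
   block of G_{k} (blocks of width (q^s)^(k-1)) has first row rho_j and a copy
   of G_{k-1} below it. *)
Fixpoint Gent (k i c : nat) : R :=
  match k with
  | 0 => 0
  | k'.+1 => match i with
             | 0 => rho (c %/ (q ^ s) ^ k')
             | i'.+1 => Gent k' i' (c %% (q ^ s) ^ k')
             end
  end.

Definition Gmx (k : nat) : 'M[R]_(k, (q ^ s) ^ k) := \matrix_(i, c) Gent k i c.

Definition Scode (k : nat) : {set 'rV[R]_((q ^ s) ^ k)} :=
  [set a *m Gmx k | a : 'rV[R]_k].

Variables (pi : R -> F) (M : 'M[F]_(s, q ^ s.-1)).
Definition gray (r : R) : 'rV[F]_(q ^ s.-1) :=
  (\row_(i < s) pi (e (digit r i))) *m M.

(* coordinatewise extension (concatenation of the images) *)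
Definition gray_vec (n : nat) (c : 'rV[R]_n) : 'rV[F]_(n * q ^ s.-1) :=
  mxvec (\matrix_(t < n) gray (c 0 t)).

Definition gray_code (k : nat) : {set 'rV[F]_((q ^ s) ^ k * q ^ s.-1)} :=
  [set gray_vec c | c in Scode k].

End ChainRingCodes.

Section Hamming.
Variable (F : finFieldType).

Definition wH (n : nat) (v : 'rV[F]_n) : nat := #|[set j | v 0 j != 0]|.
Definition dH (n : nat) (u v : 'rV[F]_n) : nat := wH (u - v).

(* Hamming weight enumerator sum_i A_i X^(n-i) Y^i in Z[X][Y]:
   X is the inner variable ('X)%:P, Y the outer variable 'X *)
Definition varX : {poly {poly int}} := ('X)%:P.
Definition varY : {poly {poly int}} := 'X.
Definition weight_enum (n : nat) (C : {set 'rV[F]_n}) : {poly {poly int}} :=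
  \sum_(i < n.+1) (#|[set c in C | wH c == i]|)%:R * varX ^+ (n - i) * varY ^+ i.
End Hamming.

From mathcomp Require Import all_boot all_order all_algebra.
From mathcomp Require Import zify ring.
Set Implicit Arguments. Unset Strict Implicit. Unset Printing Implicit Defensive.
Import GRing.Theory.
Local Open Scope ring_scope.

(* Every element of R has a unique gamma-adic expansion, so |R| = q^s, the order
   on R is total and rho enumerates R; hence the q^(sk) columns of G_k are exactly
   the vectors of R^k.  The Gray map is compatible with distances: Phi(u) and Phi(w)
   differ exactly where Phi(u - w) is nonzero.  If u - w lies in gamma^(s-1) R the
   two images differ by a constant; otherwise both sides are first order
   Reed-Muller codewords with a non-constant part, of weight q^(s-2)(q-1).
   Summing over the columns x of G_k, for a != b the v-th Gray coordinate of
   (a - b) x is shifted by any prescribed field element when x is translated by a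
   multiple of a preimage of gamma^(s-1), so it vanishes for exactly 1/q of the x.
   Hence any two distinct codewords are at distance q^(s(k+1)-2)(q-1): the code is
   equidistant and its weight enumerator has two terms. *)

(** * Counting and Hamming weights *)

Section TranslationCounting.
Variables (F : finFieldType) (X : finType) (L : X -> F) (tau : F -> X -> X).
Hypotheses (tau_inj : forall f, injective (tau f))
  (L_tau : forall f x, L (tau f x) = L x + f).

Lemma card_level_set f : #|[set x | L x == f]| = #|[set x | L x == 0]|.
Proof.
rewrite -(card_preimset _ (@tau_inj f)); apply: eq_card => x.
by rewrite !inE L_tau -[L x + f == f]subr_eq0 addrK.
Qed.

Lemma card_translation_level0 : #|X| = (#|F| * #|[set x | L x == 0%R]|)%N.
Proof.
rewrite -[#|X|]sum1_card (partition_big L xpredT) //=.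
under eq_bigr => f _ do rewrite sum1dep_card card_level_set.
by rewrite sum_nat_const cardE -cardT.
Qed.

Lemma card_translation_neq0 :
  (#|F| * #|[set x | L x != 0%R]| = #|X| * (#|F| - 1))%N.
Proof.
have -> : #|[set x | L x != 0%R]| = (#|X| - #|[set x | L x == 0%R]|)%N.
  rewrite -(cardsC [set x | L x == 0]) addKn; apply: eq_card => x.
  by rewrite !inE.
by rewrite card_translation_level0 -[X in (_ - X)%N]mul1n -mulnBl mulnCA mulnC.
Qed.

End TranslationCounting.

Lemma card_set_sum_ind (T : finType) (P : pred T) :
  #|[set x | P x]| = (\sum_x (P x : nat))%N.
Proof. by rewrite -sum1dep_card big_mkcond; apply: eq_bigr => x _; case: (P x). Qed.

Section HammingWeight.
Variable F : finFieldType.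

Lemma wH_sum n (v : 'rV[F]_n) : wH v = (\sum_j (v 0%R j != 0%R : nat))%N.
Proof. exact: card_set_sum_ind. Qed.

Lemma wH_eq0 n (v : 'rV[F]_n) : (wH v == 0%N) = (v == 0).
Proof.
rewrite cards_eq0; apply/eqP/eqP => [/setP v0|->].
  by apply/rowP => j; have := v0 j; rewrite !inE mxE => /negbFE/eqP.
by apply/setP => j; rewrite !inE mxE eqxx.
Qed.

Lemma dH_card n (u v : 'rV[F]_n) : dH u v = #|[set j | u 0 j != v 0 j]|.
Proof. by apply: eq_card => j; rewrite !inE !mxE subr_eq0. Qed.

Lemma dHxx n (u : 'rV[F]_n) : dH u u = 0%N.
Proof. by apply/eqP; rewrite /dH wH_eq0 subrr. Qed.

Lemma dHr0 n (u : 'rV[F]_n) : dH u 0 = wH u.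
Proof. by rewrite /dH subr0. Qed.

Lemma dH_sum n (u v : 'rV[F]_n) : dH u v = (\sum_j (u 0%R j != v 0%R j : nat))%N.
Proof. by rewrite /dH wH_sum; apply: eq_bigr => j _; rewrite !mxE subr_eq0. Qed.

Lemma dH_mxvec m n (A B : 'M[F]_(m, n)) :
  dH (mxvec A) (mxvec B) = (\sum_(t < m) dH (row t A) (row t B))%N.
Proof.
rewrite dH_sum (reindex _ (onW_bij _ (onT_bij (curry_mxvec_bij m n)))) /=.
transitivity (\sum_(t < m) \sum_(v < n) (A t v != B t v : nat))%N.
  by rewrite pair_bigA; apply: eq_bigr => -[t v] _; rewrite /= !mxvecE.
by apply: eq_bigr => t _; rewrite dH_sum; apply: eq_bigr => v _; rewrite !mxE.
Qed.

Lemma weight_enum_one_weight n (C : {set 'rV[F]_n}) l :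
  (0 < l <= n)%N -> 0 \in C -> (forall c, c \in C -> c != 0 -> wH c = l) ->
  weight_enum C = (#|C| - 1)%N%:R * varX ^+ (n - l) * varY ^+ l + varX ^+ n.
Proof.
move=> /andP[l_gt0 l_le_n] C0 wH_C.
have countE (i : nat) : #|[set c in C | wH c == i]| =
    if i == l then (#|C| - 1)%N else if i == 0%N then 1%N else 0%N.
  have wHE c : c \in C -> wH c = if c == 0 then 0%N else l.
    by move=> cC; case: eqP => [->|/eqP]; [apply/eqP; rewrite wH_eq0 | exact: wH_C].
  have [->|ne_il] := eqVneq i l.
    rewrite (cardsD1 0 C) C0 add1n subn1 /=; apply: eq_card => c; rewrite !inE.
    case cC: (c \in C); rewrite ?andbF ?andbT // wHE //.
    by case: (eqVneq c 0) => _; rewrite ?eqxx ?(ltn_eqF l_gt0).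
  have [->|ne_i0] := eqVneq i 0%N.
    transitivity #|[set (0 : 'rV[F]_n)]|; last exact: cards1.
    apply: eq_card => c; rewrite !inE wH_eq0.
    by case: (eqVneq c 0) => [->|_]; rewrite ?C0 ?andbF.
  apply/eqP; rewrite cards_eq0; apply/eqP/setP => c; rewrite !inE.
  case cC: (c \in C) => //=; rewrite wHE //.
  by case: (c == 0); rewrite eq_sym ?(negbTE ne_i0) ?(negbTE ne_il).
rewrite /weight_enum (bigD1 (Ordinal (l_le_n : l < n.+1)%N)) //=.
rewrite (bigD1 ord0) /=; last by rewrite -val_eqE /= eq_sym -lt0n.
rewrite big1; last first.
  move=> i /andP[].
  by rewrite -!val_eqE /= countE => /negbTE-> /negbTE->; rewrite !mul0r.
by rewrite !countE eqxx (ltn_eqF l_gt0) eqxx subn0 expr0 !mulr1 addr0 mul1r.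
Qed.

End HammingWeight.

Section FirstOrderReedMuller.
Variables (F : finFieldType) (s : nat) (M : 'M[F]_(s, #|F| ^ s.-1)).
Hypotheses (M_top : forall (i : 'I_s) j, val i = s.-1 -> M i j = 1)
  (M_col_inj : forall j j', (forall i : 'I_s, (val i < s.-1)%N -> M i j = M i j') -> j = j').

Local Notation q := #|F|.

(* Moving to the column whose [i0]-th coordinate is shifted by [f / x_i0]
   translates the codeword [x *m M] by [f]. *)
Lemma wH_mulmx_RM1 (x : 'rV[F]_s) (i0 : 'I_s) : (i0 < s.-1)%N -> x 0 i0 != 0 ->
  (q * wH (x *m M) = q ^ s.-1 * (q - 1))%N.
Proof.
move=> i0_lt x_i0_neq0; pose i0' : 'I_s.-1 := Ordinal i0_lt.
pose low (j : 'I_(q ^ s.-1)) : 'rV[F]_s.-1 := \row_i M (widen_ord (leq_pred s) i) j.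
have low_inj : injective low.
  move=> j j' /rowP eq_low; apply: M_col_inj => i i_lt.
  by have := eq_low (Ordinal i_lt); rewrite !mxE (_ : widen_ord _ _ = i) //; apply: val_inj.
have [lowV lowK lowVK] : bijective low.
  by apply: inj_card_bij low_inj _; rewrite card_mx !card_ord mul1n.
pose tau f j := lowV (low j + (f / x 0 i0) *: delta_mx 0 i0').
have M_tau f j i : M i (tau f j) = M i j + (i == i0)%:R * (f / x 0 i0).
  have [i_lt|i_ge] := ltnP i s.-1.
    have := congr1 (fun r : 'rV[F]_s.-1 => r 0 (Ordinal i_lt))
      (lowVK (low j + (f / x 0 i0) *: delta_mx 0 i0')).
    rewrite !mxE (_ : widen_ord _ _ = i); last exact: val_inj.
    by move=> ->; rewrite -val_eqE /= mulrC.
  have i_top : val i = s.-1.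
    by apply/eqP; rewrite eqn_leq i_ge andbT -ltnS (ltn_predK (ltn_ord i)) ltn_ord.
  by rewrite !M_top // (_ : (i == i0) = false) ?mul0r ?addr0 // -val_eqE /= i_top gtn_eqF.
have xM_tau f j : (x *m M) 0 (tau f j) = (x *m M) 0 j + f.
  rewrite !mxE; under eq_bigr => i _ do rewrite M_tau mulrDr.
  rewrite big_split /= [X in _ + X](bigD1 i0) //= eqxx mul1r mulrCA divff ?mulr1 //.
  by rewrite [X in f + X]big1 ?addr0 // => i /negbTE->; rewrite mul0r mulr0.
have tau_inj f : injective (tau f).
  by move=> j j' /(congr1 low); rewrite !lowVK => /addIr /low_inj.
by rewrite /wH (card_translation_neq0 tau_inj xM_tau) card_ord.
Qed.

End FirstOrderReedMuller.

(** * Gamma-adic expansions *)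

Section GammaAdicGrayCode.
Variables (R : finComNzRingType) (F : finFieldType) (pi : {rmorphism R -> F}).
Variables (gamma : R) (s : nat) (e : nat -> R).
Hypotheses (s_gt0 : (0 < s)%N) (gammaXs : gamma ^+ s = 0)
  (gammaX_neq0 : forall t, (1 <= t < s)%N -> gamma ^+ t != 0)
  (ker_pi : forall r, pi r = 0 <-> r \in principal_ideal gamma)
  (e0 : e 0%N = 0)
  (pi_e_inj : forall i j, (i < #|F|)%N -> (j < #|F|)%N -> pi (e i) = pi (e j) -> i = j).

Local Notation q := #|F|.

Lemma q_gt0 : (0 < q)%N. Proof. exact: ltnW (card_finNzRing_gt1 F). Qed.

Lemma pi_gamma : pi gamma = 0.
Proof. by apply/ker_pi/imsetP; exists 1; rewrite ?inE ?mulr1. Qed.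

Lemma pi_eq0_gamma_dvd x : pi x = 0 -> exists z, x = gamma * z.
Proof. by move/ker_pi/imsetP => [z _ ->]; exists z. Qed.

Definition lift_digit (f : F) : 'I_q :=
  odflt (Ordinal q_gt0) [pick j : 'I_q | pi (e j) == f].

Lemma pi_e_ord_inj : injective (fun j : 'I_q => pi (e j)).
Proof. by move=> i j /(pi_e_inj (ltn_ord i) (ltn_ord j)) /val_inj. Qed.

Lemma pi_e_eq0 (j : 'I_q) : (pi (e j) == 0) = (j == 0 :> nat).
Proof.
apply/eqP/eqP => [|->]; last by rewrite e0 rmorph0.
by rewrite -(rmorph0 pi) -e0 => /(pi_e_inj (ltn_ord j) q_gt0).
Qed.

Lemma pi_e_lift f : pi (e (lift_digit f)) = f.
Proof.
have /codomP [j ->] : f \in codom (fun j : 'I_q => pi (e j)).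
  by apply: inj_card_onto pi_e_ord_inj _ _; rewrite card_ord.
by rewrite /lift_digit; case: pickP => [j' /eqP //|/(_ j)]; rewrite eqxx.
Qed.

(* [x * y0 = 1 + gamma z] for some [y0], and [gamma z] is nilpotent. *)
Lemma pi_neq0_invertible x : pi x != 0 -> exists y, x * y = 1.
Proof.
move=> pix_neq0; set y0 := e (lift_digit (pi x)^-1).
have : pi (x * y0 - 1) = 0.
  by rewrite rmorphB rmorphM rmorph1 pi_e_lift mulfV ?subrr.
move/pi_eq0_gamma_dvd => [z xy0E]; set w := gamma * z in xy0E.
have wXs : w ^+ s = 0 by rewrite exprMn gammaXs mul0r.
exists (y0 * \sum_(i < s) (- w) ^+ i).
have := subrX1 (- w) s; rewrite exprNn wXs mulr0 sub0r => geomE.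
rewrite mulrA (_ : x * y0 = 1 + w); last by rewrite -xy0E; ring.
have -> : 1 + w = - (- w - 1) by ring.
by rewrite mulNr -geomE opprK.
Qed.

Lemma pi_eq0_of_gammaX_mul j x : (j < s)%N -> gamma ^+ j * x = 0 -> pi x = 0.
Proof.
move=> j_lt_s gjx0; apply/eqP/negPn/negP => /pi_neq0_invertible [y xy1].
have : gamma ^+ j = 0 by rewrite -[gamma ^+ j]mulr1 -xy1 mulrA gjx0 mul0r.
case: j j_lt_s {gjx0} => [|j] j_lt_s; first by move/eqP; rewrite oner_eq0.
by apply/eqP; apply: gammaX_neq0.
Qed.

Lemma pi_first_coef_eq0 (c : 'I_s -> R) (i0 : 'I_s) :
  (forall i : 'I_s, (i < i0)%N -> c i = 0) ->
  \sum_(i < s) c i * gamma ^+ i = 0 -> pi (c i0) = 0.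
Proof.
move=> c_below sum0.
have sumE : \sum_(i < s) c i * gamma ^+ i
          = gamma ^+ i0 * \sum_(i < s) c i * gamma ^+ (i - i0).
  rewrite mulr_sumr; apply: eq_bigr => i _.
  have [i_lt|i_ge] := ltnP i i0; first by rewrite c_below // !mul0r mulr0.
  by rewrite mulrCA -exprD subnKC.
have := pi_eq0_of_gammaX_mul (ltn_ord i0) (etrans (esym sumE) sum0).
rewrite rmorph_sum (bigD1 i0) //= subnn expr0 mulr1 big1 ?addr0 // => i ne_i_i0.
rewrite rmorphM rmorphXn pi_gamma expr0n.
have [i_lt|i_ge] := ltnP i i0; first by rewrite c_below ?rmorph0 ?mul0r.
by rewrite subn_eq0 leqNgt ltn_neqAle i_ge andbT eq_sym val_eqE ne_i_i0 mulr0.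
Qed.

Definition expand (d : {ffun 'I_s -> 'I_q}) : R := \sum_(i < s) e (d i) * gamma ^+ i.

Lemma partial_expansion m : (m <= s)%N -> forall r, exists (d : nat -> 'I_q) (z : R),
  r = \sum_(i < m) e (d i) * gamma ^+ i + gamma ^+ m * z.
Proof.
elim: m => [|m IH] m_le_s r.
  by exists (fun _ => Ordinal q_gt0), r; rewrite big_ord0 expr0 mul1r add0r.
have [d [z rE]] := IH (ltnW m_le_s) r.
set j := lift_digit (pi z).
have /pi_eq0_gamma_dvd [z' zE] : pi (z - e j) = 0 by rewrite rmorphB pi_e_lift subrr.
exists (fun i => if i == m then j else d i), z'.
rewrite big_ord_recr /= eqxx rE exprSr.
under [in RHS]eq_bigr => i _ do rewrite ltn_eqF //.
have -> : z = e j + gamma * z' by rewrite -zE; ring.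
ring.
Qed.

Lemma expand_surj r : exists d, r = expand d.
Proof.
have [d [z ->]] := partial_expansion (leqnn s) r.
exists [ffun i : 'I_s => d i]; rewrite gammaXs mul0r addr0.
by apply: eq_bigr => i _; rewrite ffunE.
Qed.

Lemma expand_inj : injective expand.
Proof.
move=> d d' dd'E; apply/ffunP => i.
have diff0 : \sum_(i < s) (e (d i) - e (d' i)) * gamma ^+ i = 0.
  under eq_bigr => i0 _ do rewrite mulrBl.
  by rewrite sumrB; apply/eqP; rewrite subr_eq0; apply/eqP; exact: dd'E.
elim: {i}_.+1 {-2}i (ltnSn i) => // n IH i; rewrite ltnS => i_le_n.
apply/val_inj/(pi_e_inj (ltn_ord _) (ltn_ord _))/eqP; rewrite -subr_eq0 -rmorphB.
apply/eqP/(pi_first_coef_eq0 _ diff0) => i' lt_i'_i.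
by rewrite IH ?subrr // (leq_trans lt_i'_i).
Qed.

Local Notation digit := (@digit R F gamma s e).

Lemma digit_expand d i : digit (expand d) i = d i.
Proof.
rewrite /digit; case: pickP => [d' /eqP/expand_inj -> //|/(_ d)].
by rewrite /gadic_expansion eqxx.
Qed.

Lemma digit_lt r i : (digit r i < q)%N.
Proof. by have [d ->] := expand_surj r; rewrite digit_expand. Qed.

Definition digits r : {ffun 'I_s -> 'I_q} := [ffun i => Ordinal (digit_lt r i)].

Lemma digitsK : cancel digits expand.
Proof.
move=> r; have [d rE] := expand_surj r; rewrite [in RHS]rE; congr expand.
by apply/ffunP => i; apply: val_inj; rewrite ffunE /= rE digit_expand.
Qed.

Lemma expandK : cancel expand digits.
Proof. by move=> d; apply: expand_inj; rewrite digitsK. Qed.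

Lemma card_chain_ring : #|R| = (q ^ s)%N.
Proof.
have expand_bij : bijective expand by exists digits; [apply: expandK|apply: digitsK].
by rewrite -(bij_eq_card expand_bij) card_ffun !card_ord.
Qed.

Lemma digit_inj x y : (forall i, digit x i = digit y i) -> x = y.
Proof.
move=> xyE; rewrite -(digitsK x) -(digitsK y); congr expand.
by apply/ffunP => i; apply: val_inj; rewrite !ffunE /= xyE.
Qed.

(** * The order on R and the columns of G_k *)

Local Notation lt := (@chain_lt R F gamma s e).

Lemma chain_ltP y x : reflect
  (exists2 i : 'I_s, (digit y i < digit x i)%N &
     forall j : 'I_s, (i < j)%N -> digit y j = digit x j)
  (lt y x).
Proof.
apply: (iffP existsP) => [[i /andP[lt_i /forallP eq_above]]|[i lt_i eq_above]]; exists i => //.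
  by move=> j /(implyP (eq_above j)) /eqP.
by rewrite lt_i; apply/forallP => j; apply/implyP => /eq_above ->.
Qed.

Lemma chain_lt_irr x : ~~ lt x x.
Proof. by apply/chain_ltP => -[i]; rewrite ltnn. Qed.

Lemma chain_lt_trans y x z : lt y x -> lt x z -> lt y z.
Proof.
move=> /chain_ltP[i lt_i eq_i] /chain_ltP[i' lt_i' eq_i']; apply/chain_ltP.
have [lt_ii'|lt_i'i|/val_inj eq_ii'] := ltngtP i i'.
- exists i'; first by rewrite eq_i.
  by move=> j lt_j; rewrite eq_i ?eq_i' // (ltn_trans lt_ii').
- exists i; first by rewrite -eq_i'.
  by move=> j lt_j; rewrite eq_i ?eq_i' // (ltn_trans lt_i'i).
- subst i'; exists i; first exact: ltn_trans lt_i lt_i'.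
  by move=> j lt_j; rewrite eq_i ?eq_i'.
Qed.

Lemma chain_lt_total x y : x != y -> lt x y || lt y x.
Proof.
move=> neq_xy.
have [i0 neq_i0] : exists i, digit x i != digit y i.
  apply/existsP; apply: contraR neq_xy => /existsPn eq_xy; apply/eqP.
  by apply: digit_inj => i; apply/eqP/negbNE.
have [i neq_i max_i] := @arg_maxnP 'I_s i0 (fun i => digit x i != digit y i) val neq_i0.
have eq_above (j : 'I_s) : (i < j)%N -> digit x j = digit y j.
  by move=> lt_ij; apply/eqP; apply: contraTT lt_ij => /max_i; rewrite -leqNgt.
have [lt_xy|lt_yx|eq_i] := ltngtP (digit x i) (digit y i); last by rewrite eq_i eqxx in neq_i.
- by apply/orP; left; apply/chain_ltP; exists i.
- by apply/orP; right; apply/chain_ltP; exists i => // j /eq_above.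
Qed.

Definition chain_rank r := #|[set y | lt y r]|.

Lemma chain_rank_lt r : (chain_rank r < #|R|)%N.
Proof.
rewrite -cardsT; apply/proper_card; rewrite properT.
by apply/eqP => /setP/(_ r); rewrite !inE (negbTE (chain_lt_irr r)).
Qed.

Lemma chain_rank_inj : injective chain_rank.
Proof.
move=> x y eq_rank; apply/eqP/negPn/negP => neq_xy.
wlog lt_xy : x y eq_rank neq_xy / lt x y.
  move=> W; have /orP[] := chain_lt_total neq_xy; first exact: W.
  by apply: W; rewrite // eq_sym.
suff /proper_card : [set z | lt z x] \proper [set z | lt z y].
  by rewrite -/(chain_rank x) -/(chain_rank y) eq_rank ltnn.
apply/properP; split; last by exists x; rewrite !inE ?lt_xy ?(negbTE (chain_lt_irr x)).
by apply/subsetP => z; rewrite !inE => /chain_lt_trans; apply.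
Qed.

Lemma chain_rank_rho j : (j < #|R|)%N -> chain_rank (@rho R F gamma s e j) = j.
Proof.
move=> lt_j; pose ord_rank r := Ordinal (chain_rank_lt r).
have ord_rank_inj : injective ord_rank by move=> x y /(congr1 val) /chain_rank_inj.
have /codomP [r /(congr1 val) /= rankE] : Ordinal lt_j \in codom ord_rank.
  by apply: inj_card_onto ord_rank_inj _ _; rewrite card_ord.
rewrite /rho; case: pickP => [r' /eqP //|/(_ r)].
by rewrite -/(chain_rank r) rankE eqxx.
Qed.

Lemma rho_inj j j' : (j < #|R|)%N -> (j' < #|R|)%N ->
  @rho R F gamma s e j = @rho R F gamma s e j' -> j = j'.
Proof. by move=> lt_j lt_j' eq_rho; rewrite -(chain_rank_rho lt_j) eq_rho chain_rank_rho. Qed.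

Local Notation Q := (q ^ s)%N.

Lemma Gent_col_inj k c c' : (c < Q ^ k)%N -> (c' < Q ^ k)%N ->
  (forall i, (i < k)%N -> @Gent R F gamma s e k i c = @Gent R F gamma s e k i c') ->
  c = c'.
Proof.
elim: k c c' => [|k IH] c c' lt_c lt_c' eq_col.
  by move: lt_c lt_c'; rewrite expn0 !ltnS !leqn0 => /eqP-> /eqP->.
have Qk_gt0 : (0 < Q ^ k)%N by rewrite !expn_gt0 q_gt0.
have lt_card b : (b < Q ^ k.+1)%N -> (b %/ Q ^ k < #|R|)%N.
  by rewrite card_chain_ring ltn_divLR // -expnS.
have eq_div := rho_inj (lt_card _ lt_c) (lt_card _ lt_c') (eq_col 0%N isT).
have eq_mod : (c %% Q ^ k = c' %% Q ^ k)%N.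
  by apply: IH; rewrite ?ltn_pmod // => i; apply: (eq_col i.+1).
by rewrite (divn_eq c (Q ^ k)) (divn_eq c' (Q ^ k)) eq_div eq_mod.
Qed.

Definition Gcol k (c : 'I_(Q ^ k)) : 'cV[R]_k := col c (@Gmx R F gamma s e k).

Lemma Gcol_bij k : bijective (@Gcol k).
Proof.
apply: inj_card_bij; last by rewrite card_mx card_ord card_chain_ring muln1.
move=> c c' /matrixP eq_col; apply/val_inj/(Gent_col_inj (ltn_ord c) (ltn_ord c')) => i lt_i.
by have := eq_col (Ordinal lt_i) 0; rewrite !mxE.
Qed.

(** * The top digit and the Gray map *)

Definition top : 'I_s := Ordinal (etrans (ltn_predL s) s_gt0).

Lemma ltn_top (i : 'I_s) : (i < s.-1)%N = (i != top).
Proof. by rewrite -val_eqE /= ltn_neqAle -ltnS (ltn_predK (ltn_ord i)) ltn_ord andbT. Qed.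

Lemma mul_gammaX_top c : c * gamma ^+ s.-1 = e (lift_digit (pi c)) * gamma ^+ s.-1.
Proof.
set m := lift_digit (pi c).
have /pi_eq0_gamma_dvd [z cE] : pi (c - e m) = 0 by rewrite rmorphB pi_e_lift subrr.
rewrite -[c in LHS](subrK (e m)) cE mulrDl -mulrA mulrCA.
by rewrite -exprS prednK // gammaXs mulr0 add0r.
Qed.

Lemma digits_add_top r (j : 'I_q) : digits (r + e j * gamma ^+ s.-1) =
  [ffun i => if i == top then lift_digit (pi (e (digits r top)) + pi (e j)) else digits r i].
Proof.
rewrite -[RHS]expandK; congr digits.
rewrite -{1}(digitsK r) /expand (bigD1 top) //= [in RHS](bigD1 top) //=.
under [in RHS]eq_bigr => i /negbTE ne_top do rewrite ffunE ne_top.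
by rewrite [in RHS]ffunE eqxx -rmorphD -mul_gammaX_top mulrDl addrAC.
Qed.

Lemma digits0 i : digits 0 i = Ordinal q_gt0.
Proof.
have zeroE : expand [ffun=> Ordinal q_gt0] = 0.
  by rewrite /expand big1 // => j _; rewrite ffunE e0 mul0r.
by rewrite -zeroE expandK ffunE.
Qed.

Lemma digits_mul_gammaX_top c i : i != top -> (digits (c * gamma ^+ s.-1) i : nat) = 0%N.
Proof.
move=> /negbTE ne_top; rewrite mul_gammaX_top -[_ * _]add0r digits_add_top.
by rewrite ffunE ne_top digits0.
Qed.

Lemma sub_eq_mul_gammaX_top u w : (forall i, i != top -> digits u i = digits w i) ->
  u - w = (e (digits u top) - e (digits w top)) * gamma ^+ s.-1.
Proof.
move=> eq_low; rewrite -{1}(digitsK u) -{1}(digitsK w) /expand -sumrB (bigD1 top) //=.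
by rewrite mulrBl big1 ?addr0 // => i /eq_low->; rewrite subrr.
Qed.

Lemma low_digits0 r : (forall i, i != top -> (digits r i : nat) = 0%N) ->
  r = e (digits r top) * gamma ^+ s.-1.
Proof.
move=> low0; rewrite -[LHS]subr0 (@sub_eq_mul_gammaX_top r 0).
  by rewrite digits0 e0 subr0.
by move=> i /low0 ri0; apply: val_inj; rewrite digits0.
Qed.

Variable M : 'M[F]_(s, q ^ s.-1).
Hypotheses (M_top : forall (i : 'I_s) j, val i = s.-1 -> M i j = 1)
  (M_col_inj : forall j j', (forall i : 'I_s, (val i < s.-1)%N -> M i j = M i j') -> j = j').

Local Notation gray := (@gray R F gamma s e pi M).

Definition pi_digits r : 'rV[F]_s := \row_i pi (e (digits r i)).

Lemma grayE r : gray r = pi_digits r *m M.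
Proof. by apply/rowP => v; rewrite !mxE; apply: eq_bigr => i _; rewrite !mxE ffunE. Qed.

Lemma gray_add_top r (j : 'I_q) v :
  gray (r + e j * gamma ^+ s.-1) 0 v = gray r 0 v + pi (e j).
Proof.
rewrite !grayE !mxE (bigD1 top) //= [in RHS](bigD1 top) //= !mxE !M_top // !mulr1.
rewrite digits_add_top ffunE eqxx pi_e_lift [RHS]addrAC; congr (_ + _).
by apply: eq_bigr => i /negbTE ne_top; rewrite !mxE digits_add_top ffunE ne_top.
Qed.

Lemma gray0 v : gray 0 0 v = 0.
Proof. by rewrite grayE mxE big1 // => i _; rewrite mxE digits0 e0 rmorph0 mul0r. Qed.

Lemma dH_gray u w : dH (gray u) (gray w) = wH (gray (u - w)).
Proof.
have [low0|] := boolP [forall i, (i != top) ==> ((digits (u - w) i : nat) == 0%N)].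
  have [m uwE] : exists m : 'I_q, u - w = e m * gamma ^+ s.-1.
    exists (digits (u - w) top); apply: low_digits0 => i ne_top.
    exact/eqP/(implyP (forallP low0 i) ne_top).
  rewrite uwE -[u](subrK w) uwE addrC dH_card /wH.
  apply: eq_card => v; rewrite !inE gray_add_top -[e m * _]add0r gray_add_top gray0.
  by rewrite add0r -[X in _ != X]addr0 (inj_eq (addrI _)).
rewrite negb_forall => /existsP[i1]; rewrite negb_imply => /andP[i1_ne_top d_i1].
have [i0 i0_ne_top d_i0] : exists2 i0 : 'I_s, i0 != top & digits u i0 != digits w i0.
  apply/exists_inP; apply: contraTT d_i1 => /exists_inPn eq_low; rewrite negbK.
  rewrite (sub_eq_mul_gammaX_top (fun i ne => eqP (negbNE (eq_low i ne)))).
  by rewrite digits_mul_gammaX_top.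
have weight (x : 'rV[F]_s) i : i != top -> x 0 i != 0 ->
    (q * wH (x *m M) = q ^ s.-1 * (q - 1))%N.
  by rewrite -ltn_top; apply: wH_mulmx_RM1.
apply/eqP; rewrite -(eqn_pmul2l q_gt0) /dH !grayE -mulmxBl (weight _ i1) ?(weight _ i0) //.
  by rewrite !mxE subr_eq0; apply: contra d_i0 => /eqP /pi_e_ord_inj ->.
by rewrite mxE pi_e_eq0.
Qed.

(* Write [r = gamma ^+ t * w] with [pi w != 0]; then [w] is invertible. *)
Lemma mul_eq_gammaX_top r : r != 0 -> exists y, r * y = gamma ^+ s.-1.
Proof.
have valuation m t w : (t + m = s)%N -> gamma ^+ t * w != 0 ->
    exists y, gamma ^+ t * w * y = gamma ^+ s.-1.
  elim: m t w => [|m IH] t w; first by rewrite addn0 => ->; rewrite gammaXs mul0r eqxx.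
  move=> tmE gtw_neq0; have [/pi_eq0_gamma_dvd [z wE]|pi_w_neq0] := eqVneq (pi w) 0.
    by rewrite wE mulrA -exprSr in gtw_neq0 *; apply: IH; rewrite // addSnnS.
  have [y wy1] := pi_neq0_invertible pi_w_neq0.
  exists (y * gamma ^+ (s.-1 - t)); rewrite mulrA -(mulrA _ w) wy1 mulr1 -exprD subnKC //.
  by rewrite -ltnS prednK // -tmE addnS ltnS leq_addr.
by move=> r_neq0; have := valuation s 0%N r (add0n s); rewrite expr0 !mul1r; apply.
Qed.

Lemma card_gray_coord_neq0 k (d : 'rV[R]_k) (v : 'I_(q ^ s.-1)) : d != 0 ->
  (q * #|[set x : 'cV[R]_k | gray ((d *m x) 0%R 0%R) 0%R v != 0%R]| = q ^ (s * k) * (q - 1))%N.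
Proof.
move=> d_neq0; have [i di_neq0] : exists i, d 0 i != 0.
  apply/existsP; apply: contraR d_neq0 => /existsPn d0; apply/eqP/rowP => i.
  by rewrite mxE; apply/eqP/negbNE/d0.
have [y diy] := mul_eq_gammaX_top di_neq0.
pose x0 : 'cV[R]_k := y *: delta_mx i 0.
have dx0 : (d *m x0) 0 0 = gamma ^+ s.-1.
  rewrite mxE (bigD1 i) //= !mxE eqxx mulr1 diy big1 ?addr0 // => j /negbTE ne_ji.
  by rewrite !mxE ne_ji !mulr0.
pose tau f x := x + e (lift_digit f) *: x0.
have gray_tau f x : gray ((d *m tau f x) 0 0) 0 v = gray ((d *m x) 0 0) 0 v + f.
  have -> : (d *m tau f x) 0 0 = (d *m x) 0 0 + e (lift_digit f) * (d *m x0) 0 0.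
    by rewrite mulmxDr -scalemxAr !mxE.
  by rewrite dx0 gray_add_top pi_e_lift.
have tau_inj f : injective (tau f) by apply: addIr.
by rewrite (card_translation_neq0 tau_inj gray_tau) card_mx card_chain_ring muln1 -expnM.
Qed.

(** * The Gray image of S_k *)

Local Notation G k := (@Gmx R F gamma s e k).

Definition gray_encode k (a : 'rV[R]_k) := @gray_vec R F gamma s e pi M _ (a *m G k).

Lemma gray_codeE k : gray_code gamma e pi M k = [set gray_encode a | a : 'rV[R]_k].
Proof. by rewrite /gray_code /Scode -imset_comp. Qed.

Lemma gray_encode0 k : gray_encode (0 : 'rV[R]_k) = 0.
Proof.
apply/rowP => j; rewrite /gray_encode /gray_vec mul0mx; case/mxvec_indexP: j => t v.
by rewrite mxvecE mxE [_ 0 t]mxE gray0 mxE.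
Qed.

Lemma dH_gray_vec n (c c' : 'rV[R]_n) :
  dH (@gray_vec R F gamma s e pi M _ c) (@gray_vec R F gamma s e pi M _ c') =
  (\sum_t wH (gray (c 0 t - c' 0 t)%R))%N.
Proof. by rewrite dH_mxvec; apply: eq_bigr => t _; rewrite !rowK dH_gray. Qed.

Lemma dH_gray_encode k (a b : 'rV[R]_k) : a != b ->
  dH (gray_encode a) (gray_encode b) = (q ^ (s * k.+1 - 2) * (q - 1))%N.
Proof.
case: k a b => [|k] a b neq_ab; first by rewrite [a]thinmx0 [b]thinmx0 eqxx in neq_ab.
rewrite dH_gray_vec.
transitivity (\sum_(x : 'cV[R]_k.+1) wH (gray (((a - b) *m x) 0 0)%R))%N.
  rewrite (reindex _ (onW_bij _ (Gcol_bij k.+1))); apply: eq_bigr => t _.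
  congr (wH (gray _)); rewrite !mxE -sumrB; apply: eq_bigr => i _.
  by rewrite !mxE mulrBl.
under eq_bigr => x _ do rewrite wH_sum.
rewrite exchange_big /=; under eq_bigr => v _ do rewrite -card_set_sum_ind.
apply/eqP; rewrite -(eqn_pmul2l q_gt0) big_distrr /=.
under eq_bigr => v _ do rewrite card_gray_coord_neq0 ?subr_eq0 //.
rewrite sum_nat_const card_ord mulnA -expnD mulnA -expnS; apply/eqP.
by congr (q ^ _ * _)%N; rewrite !mulnS -subn1; move: s_gt0; lia.
Qed.

Lemma min_weight_gt0 n : (0 < q ^ n * (q - 1))%N.
Proof. by rewrite muln_gt0 expn_gt0 q_gt0 subn_gt0 card_finNzRing_gt1. Qed.

Lemma min_weight_le_length k : (0 < k)%N ->
  (q ^ (s * k.+1 - 2) * (q - 1) <= q ^ (s * k.+1 - 1))%N.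
Proof.
move=> k_gt0; have sk_gt0 : (0 < s * k)%N by rewrite muln_gt0 s_gt0.
rewrite (_ : (s * k.+1 - 1 = (s * k.+1 - 2).+1)%N) ?expnS; last first.
  by rewrite mulnS; move: sk_gt0 s_gt0; lia.
by rewrite mulnC leq_mul // leq_subr.
Qed.

Lemma gray_code_length k : ((q ^ s) ^ k * q ^ s.-1 = q ^ (s * k.+1 - 1))%N.
Proof. by rewrite -expnM -expnD; congr (q ^ _)%N; rewrite mulnS -subn1; move: s_gt0; lia. Qed.

Lemma gray_encode_inj k : injective (@gray_encode k).
Proof.
move=> a b eq_enc; apply/eqP/negPn/negP => /dH_gray_encode.
by rewrite eq_enc dHxx => l0; have := min_weight_gt0 (s * k.+1 - 2); rewrite -l0.
Qed.

Lemma card_gray_code k : #|gray_code gamma e pi M k| = (q ^ (s * k))%N.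
Proof.
rewrite gray_codeE card_imset; last exact: gray_encode_inj.
by rewrite card_mx card_chain_ring mul1n -expnM.
Qed.

Lemma wH_gray_encode k (a : 'rV[R]_k) : a != 0 ->
  wH (gray_encode a) = (q ^ (s * k.+1 - 2) * (q - 1))%N.
Proof. by move=> a_neq0; rewrite -dHr0 -(gray_encode0 k) dH_gray_encode. Qed.

End GammaAdicGrayCode.

Theorem theorem3p16
  (R : finComNzRingType) (F : finFieldType) (pi : {rmorphism R -> F})
  (gamma : R) (s : nat) (e : nat -> R) (M : 'M[F]_(s, #|F| ^ s.-1)) (k : nat)
  (* R is a chain ring whose unique maximal ideal is generated by gamma *)
  (Hchain : is_chain_ring R)
  (Hmax : forall J : {set R}, is_maximal_ideal J <-> J = principal_ideal gamma)
  (* s is the least integer >= 1 with gamma^s = 0 *)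
  (Hs1 : (1 <= s)%N) (Hs : gamma ^+ s = 0)
  (Hsmin : forall t, (1 <= t < s)%N -> gamma ^+ t != 0)
  (* pi : R -> R/<gamma> ~= F_q, r |-> \bar r *)
  (Hpi_surj : forall x : F, exists r : R, pi r = x)
  (Hpi_ker : forall r : R, pi r = 0 <-> r \in principal_ideal gamma)
  (* T = {e_0, ..., e_{q-1}} is a set of coset representatives, e_0 = 0, e_1 = 1 *)
  (He0 : e 0%N = 0) (He1 : e 1%N = 1)
  (HeT : forall i j, (i < #|F|)%N -> (j < #|F|)%N -> pi (e i) = pi (e j) -> i = j)
  (* the columns of M are exactly the vectors (v, 1)^T, v in F_q^(s-1) *)
  (HMlast : forall (i : 'I_s) j, val i = s.-1 -> M i j = 1)
  (HMcols : forall j j', (forall i : 'I_s, (val i < s.-1)%N -> M i j = M i j') -> j = j')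
  (Hk : (1 <= k)%N) :
  let q := #|F| in
  let C := gray_code gamma e pi M k in
  let n' := (q ^ (s * k.+1 - 1))%N in
  let l := (q ^ (s * k.+1 - 2) * (q - 1))%N in
  [/\ ((q ^ s) ^ k * q ^ s.-1 = n')%N,
      #|C| = (q ^ (s * k))%N,
      (exists2 c1, c1 \in C & exists2 c2, c2 \in C & c1 != c2 /\ dH c1 c2 = l),
      (forall c1 c2, c1 \in C -> c2 \in C -> c1 != c2 -> (l <= dH c1 c2)%N)
    & weight_enum C =
        (q ^ (s * k) - 1)%N%:R * varX ^+ (n' - l) * varY ^+ l + varX ^+ n'].
Proof.
move=> q C n' l.
pose enc := @gray_encode R F pi gamma s e M k.
have CE : C = [set enc a | a : 'rV[R]_k] by apply: gray_codeE.
have enc_dH a b : a != b -> dH (enc a) (enc b) = l by apply: dH_gray_encode.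
have enc_inj : injective enc by apply: gray_encode_inj.
have length : ((q ^ s) ^ k * q ^ s.-1 = n')%N by apply: gray_code_length.
have card_C : #|C| = (q ^ (s * k))%N by apply: card_gray_code.
have enc0 : enc 0 = 0 by apply: gray_encode0.
split => //.
- have neq_01 : 0 != const_mx 1 :> 'rV[R]_k.
    by apply/eqP => /rowP /(_ (Ordinal Hk)); rewrite !mxE => /eqP; rewrite eq_sym oner_eq0.
  exists (enc 0); first by rewrite CE imset_f.
  exists (enc (const_mx 1)); first by rewrite CE imset_f.
  by rewrite (inj_eq enc_inj) neq_01 enc_dH.
- move=> c1 c2; rewrite CE => /imsetP[a _ ->] /imsetP[b _ ->] neq_c.
  by rewrite enc_dH //; apply: contraNneq neq_c => ->.
rewrite -length -card_C; apply: weight_enum_one_weight; rewrite ?CE.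
- by rewrite min_weight_gt0 length; apply: min_weight_le_length.
- by rewrite -enc0 imset_f.
move=> _ /imsetP[a _ ->] enc_neq0; apply: wH_gray_encode => //.
by apply: contraNneq enc_neq0 => ->; rewrite enc0.
Qed.
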